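(* Let $\lambda,\mu\in(0,1)$ with $\lambda+\mu>1$, and let $c:=(1-\mu)/\lambda$. Define $f_1:[0,c]\to[0,1]$, $f_1(x)=\lambda x+\mu$, and $f_2:[c,1]\to[0,1]$, $f_2(x)=\lambda x+\mu-1$. Then every map $f:[0,1]\to[0,1]$ such that $f|_{[0,c)}=f_1|_{[0,c)}$, $f|_{(c,1]}=f_2|_{(c,1]}$ and $c\notin f^k([f(1),f(0)])$ for all $k\in\mathbb{N}$, satisfies properties P1–P6 below with $N=2$, $c_0=0$, $c_1=c$, $c_2=1$, $X_1=[0,c)$, $X_2=(c,1]$.
   Context: For $N\geqslant 2$, points $c_0<c_1<\dots<c_N$, $X=[c_0,c_N]$, $X_1=[c_0,c_1)$, $X_i=(c_{i-1},c_i)$ for $1<i<N$, $X_N=(c_{N-1},c_N]$, and a map $f:X\to X$, define: $\Delta:=\{c_1,\dots,c_{N-1}\}$; $f_i$ the continuous extension of $f|_{X_i}$ to $\overline{X_i}$ (when it exists); $\widetilde X:=\bigcap_{n\geqslant0}f^{-n}(X\setminus\Delta)$. Atoms: $F_i(A):=\overline{f(A\cap X_i)}$, $A_{i_1\dots i_n}:=F_{i_n}\circ\dots\circ F_{i_1}(X)$ is an atom of generation $n$ if non-empty, $\mathcal{A}_n$ their set, $\mathcal{A}_n(x):=\{A\in\mathcal{A}_n:\exists t\in\mathbb{N},f^{t+n}(x)\in A\}$; attractor $\Lambda:=\bigcap_{n\geqslant1}\bigcup_{A\in\mathcal{A}_n}A$. $\Delta_{lr}(x)$ is the set of $c_i\in\Delta$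 such that for every $n\geqslant1$ there is $A\in\mathcal{A}_n(x)$ with $c_i\in A$, $f^{t+n}(x)\in A\cap X_i$ and $f^{t'+n}(x)\in A\cap X_{i+1}$ for some $t,t'\in\mathbb{N}$. P1: $f$ is a piecewise contracting map with contraction pieces $X_1,\dots,X_N$ (i.e. $f$ is discontinuous at every point of $\Delta$ and contracting with a constant $<1$ on each $X_i$), and $f|_{X_i}$ is affine with slope $\lambda\in(0,1)$ (the same for all $i$). P2: $f$ satisfies the separation property: each $f_i$ is injective and $f_i(\overline{X_i})\cap f_j(\overline{X_j})=\emptyset$ for $i\neq j$. P3: the attractor $\Lambda$ is a Cantor set. P4: $\bigcup_{i=1}^{N-1}\{f_i(c_i),f_{i+1}(c_i)\}\subset\widetilde X$. P5: there is $i\in\{1,\dots,N-1\}$ such that $\{f^n(f_i(c_i))\}_{n\in\mathbb{N}}$ or $\{f^n(f_{i+1}(c_i))\}_{n\in\mathbb{N}}$ is dense in $\Lambda$. P6: for every $x\in\widetilde X$ and $i\in\{1,\dots,N-1\}$, $c_i\in\Delta_{lr}(x)$. *)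

From Stdlib Require Import Reals Lra List.
Open Scope R_scope.

Definition iterf (f : R -> R) (n : nat) (x : R) : R := Nat.iter n f x.

(* Partition data: N pieces, points cs 0 < cs 1 < ... < cs N. *)
Definition Xall (N : nat) (cs : nat -> R) (x : R) : Prop := cs 0%nat <= x <= cs N.

Definition Xp (N : nat) (cs : nat -> R) (i : nat) (x : R) : Prop :=
  if Nat.eqb i 1 then cs 0%nat <= x < cs 1%nat
  else if Nat.eqb i N then cs (N - 1)%nat < x <= cs N
  else cs (i - 1)%nat < x < cs i.

Definition Xcl (cs : nat -> R) (i : nat) (x : R) : Prop := cs (i - 1)%nat <= x <= cs i.

Definition Delta (N : nat) (cs : nat -> R) (x : R) : Prop :=
  exists i, (1 <= i <= N - 1)%nat /\ x = cs i.

Definition cl (S : R -> Prop) (y : R) : Prop :=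
  forall eps, 0 < eps -> exists z, S z /\ Rabs (z - y) < eps.

Definition cont_within (D : R -> Prop) (g : R -> R) (x : R) : Prop :=
  forall eps, 0 < eps -> exists delta, 0 < delta /\
    forall y, D y -> Rabs (y - x) < delta -> Rabs (g y - g x) < eps.

Definition cont_ext (N : nat) (cs : nat -> R) (f : R -> R) (i : nat) (g : R -> R) : Prop :=
  (forall x, Xp N cs i x -> g x = f x) /\
  (forall x, Xcl cs i x -> cont_within (Xcl cs i) g x).

(* G i = f_i for every i in 1..N (the extensions are unique when they exist) *)
Definition exts (N : nat) (cs : nat -> R) (f : R -> R) (G : nat -> R -> R) : Prop :=
  forall i, (1 <= i <= N)%nat -> cont_ext N cs f i (G i).

Definition Xtilde (N : nat) (cs : nat -> R) (f : R -> R) (x : R) : Prop :=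
  forall n, Xall N cs (iterf f n x) /\ ~ Delta N cs (iterf f n x).

Definition Fset (N : nat) (cs : nat -> R) (f : R -> R) (i : nat) (A : R -> Prop) : R -> Prop :=
  cl (fun z => exists x, A x /\ Xp N cs i x /\ z = f x).

(* A_{i_1 ... i_n} = F_{i_n} o ... o F_{i_1} (X), for the word [i_1; ...; i_n] *)
Definition atomset (N : nat) (cs : nat -> R) (f : R -> R) (w : list nat) : R -> Prop :=
  fold_left (fun A i => Fset N cs f i A) w (Xall N cs).

Definition is_atom_word (N : nat) (cs : nat -> R) (f : R -> R) (n : nat) (w : list nat) : Prop :=
  length w = n /\ Forall (fun i => (1 <= i <= N)%nat) w /\ exists y, atomset N cs f w y.

Definition Lambda (N : nat) (cs : nat -> R) (f : R -> R) (y : R) : Prop :=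
  forall n, (1 <= n)%nat -> exists w, is_atom_word N cs f n w /\ atomset N cs f w y.

Definition in_Delta_lr (N : nat) (cs : nat -> R) (f : R -> R) (x : R) (i : nat) : Prop :=
  (1 <= i <= N - 1)%nat /\
  forall n, (1 <= n)%nat -> exists w, is_atom_word N cs f n w /\
    atomset N cs f w (cs i) /\
    (exists t, atomset N cs f w (iterf f (t + n) x) /\ Xp N cs i (iterf f (t + n) x)) /\
    (exists t', atomset N cs f w (iterf f (t' + n) x) /\ Xp N cs (i + 1) (iterf f (t' + n) x)).

Definition cantor_set (S : R -> Prop) : Prop :=
  (exists y, S y) /\
  (forall y, cl S y -> S y) /\
  (exists M, forall y, S y -> Rabs y <= M) /\
  (forall y, S y -> forall eps, 0 < eps -> exists z, S z /\ z <> y /\ Rabs (z - y) < eps) /\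
  (forall a b, S a -> S b -> a < b -> exists z, a < z < b /\ ~ S z).

Definition orbit (f : R -> R) (x : R) : R -> Prop := fun z => exists n, z = iterf f n x.

Definition dense_in (S L : R -> Prop) : Prop := forall y, L y -> cl S y.

Definition P1 (N : nat) (cs : nat -> R) (f : R -> R) (lam : R) : Prop :=
  (forall x, Xall N cs x -> Xall N cs (f x)) /\
  (forall i, (1 <= i <= N - 1)%nat -> ~ cont_within (Xall N cs) f (cs i)) /\
  (exists k, 0 <= k < 1 /\ forall i, (1 <= i <= N)%nat ->
     forall x y, Xp N cs i x -> Xp N cs i y -> Rabs (f x - f y) <= k * Rabs (x - y)) /\
  (0 < lam < 1) /\
  (forall i, (1 <= i <= N)%nat -> exists b, forall x, Xp N cs i x -> f x = lam * x + b).

Definition P2 (N : nat) (cs : nat -> R) (f : R -> R) : Prop :=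
  exists G, exts N cs f G /\
  (forall i, (1 <= i <= N)%nat -> forall x y, Xcl cs i x -> Xcl cs i y -> G i x = G i y -> x = y) /\
  (forall i j, (1 <= i <= N)%nat -> (1 <= j <= N)%nat -> i <> j ->
     forall x y, Xcl cs i x -> Xcl cs j y -> G i x <> G j y).

Definition P3 (N : nat) (cs : nat -> R) (f : R -> R) : Prop :=
  cantor_set (Lambda N cs f).

Definition P4 (N : nat) (cs : nat -> R) (f : R -> R) : Prop :=
  exists G, exts N cs f G /\
  forall i, (1 <= i <= N - 1)%nat ->
    Xtilde N cs f (G i (cs i)) /\ Xtilde N cs f (G (i + 1)%nat (cs i)).

Definition P5 (N : nat) (cs : nat -> R) (f : R -> R) : Prop :=
  exists G, exts N cs f G /\
  exists i, (1 <= i <= N - 1)%nat /\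
    (dense_in (orbit f (G i (cs i))) (Lambda N cs f) \/
     dense_in (orbit f (G (i + 1)%nat (cs i))) (Lambda N cs f)).

Definition P6 (N : nat) (cs : nat -> R) (f : R -> R) : Prop :=
  forall x, Xtilde N cs f x -> forall i, (1 <= i <= N - 1)%nat -> in_Delta_lr N cs f x i.

Definition pts2 (c : R) (k : nat) : R :=
  match k with 0%nat => 0 | 1%nat => c | _ => 1 end.

From Stdlib Require Import Reals Lra Lia List Classical.
Open Scope R_scope.

(* The first gap G_0 = (f 1, f 0) = (lam + mu - 1, mu) misses the image of f, and by hypothesis
   its images G_k = f^k(G_0) never contain c; so f^k is affine on G_0 and the G_k are pairwise
   disjoint open intervals of length lam^k (1 - lam).  An interval avoiding G_0, ..., G_(m-1) is
   the affine image of an interval 1/lam times longer avoiding one gap fewer, so its length is at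
   most lam^m.  Hence the gaps are dense and the attractor is [0,1] minus the gaps: a Cantor set
   whose points are limits of the gap endpoints f^(k+1)(1) and f^(k+1)(0).  No early gap separates
   a regular orbit from some earlier point of the orbit of 0; pulling this back shows that the
   orbit returns arbitrarily close to c, and, passing through 1 or 0, from either side.  Finally
   c = f^n(z) for a z near which f^n is affine, so a neighbourhood of c lies in a single atom of
   each generation. *)

Lemma iterf_S (g : R -> R) n x : iterf g (S n) x = g (iterf g n x).
Proof. reflexivity. Qed.

Lemma iterf_add (g : R -> R) m n x : iterf g (m + n) x = iterf g m (iterf g n x).
Proof. induction m as [|m IH]; [reflexivity|]. simpl plus. rewrite !iterf_S, IH. reflexivity. Qed.

Lemma iterf_S_r (g : R -> R) n x : iterf g (S n) x = iterf g n (g x).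
Proof. replace (S n) with (n + 1)%nat by lia. apply iterf_add. Qed.

Lemma pow_le_1 l n : 0 <= l <= 1 -> l ^ n <= 1.
Proof. intros Hl. rewrite <- (pow1 n). apply pow_incr. exact Hl. Qed.

Lemma pow_antimono l m n : 0 <= l <= 1 -> (m <= n)%nat -> l ^ n <= l ^ m.
Proof.
  intros Hl Hmn. replace n with ((n - m) + m)%nat by lia. rewrite pow_add.
  pose proof (pow_le l m (proj1 Hl)). pose proof (pow_le_1 l (n - m) Hl). nra.
Qed.

Lemma pow_eventually_lt l e : 0 <= l < 1 -> 0 < e -> exists N, forall n, (N <= n)%nat -> l ^ n < e.
Proof.
  intros Hl He. destruct (pow_lt_1_zero l) with (y := e) as [N HN]; [rewrite Rabs_pos_eq; lra|lra|].
  exists N. intros n Hn. specialize (HN n Hn). rewrite Rabs_pos_eq in HN; [lra|apply pow_le; lra].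
Qed.

Lemma exists_pos_le3 a b c : 0 < a -> 0 < b -> 0 < c ->
  exists t, 0 < t /\ t <= a /\ t <= b /\ t <= c.
Proof.
  intros Ha Hb Hc. exists (Rmin a (Rmin b c)).
  pose proof (Rmin_l a (Rmin b c)). pose proof (Rmin_r a (Rmin b c)).
  pose proof (Rmin_l b c). pose proof (Rmin_r b c).
  split; [repeat apply Rmin_glb_lt; assumption|lra].
Qed.

Lemma disjoint_open_intervals l1 r1 l2 r2 : l1 < r1 -> l2 < r2 ->
  (forall z, ~ (l1 < z < r1 /\ l2 < z < r2)) -> r1 <= l2 \/ r2 <= l1.
Proof.
  intros H1 H2 H. apply NNPP. intros Hn.
  apply (H ((Rmax l1 l2 + Rmin r1 r2) / 2)).
  pose proof (Rmax_l l1 l2); pose proof (Rmax_r l1 l2).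
  pose proof (Rmin_l r1 r2); pose proof (Rmin_r r1 r2).
  assert (Rmax l1 l2 < Rmin r1 r2) by (apply Rmax_lub_lt; apply Rmin_glb_lt; lra).
  lra.
Qed.

Lemma exists_argmax_below (g : nat -> R) m X : g 0%nat <= X ->
  exists i, (i <= m)%nat /\ g i <= X /\
    forall j, (j <= m)%nat -> g j <= X -> g j <= g i.
Proof.
  intros H0. induction m as [|m (i & Hi & HiX & Hmax)].
  - exists 0%nat. split; [lia|split; [exact H0|]]. intros j Hj _. replace j with 0%nat by lia. lra.
  - destruct (Rle_dec (g (S m)) X) as [HS|HS]; [destruct (Rle_dec (g (S m)) (g i)) as [HSi|HSi]|].
    + exists i. split; [lia|split; [exact HiX|]].
      intros j [Hj| ->]%Nat.le_succ_r HjX; [exact (Hmax j Hj HjX)|exact HSi].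
    + exists (S m). split; [lia|split; [exact HS|]].
      intros j [Hj| ->]%Nat.le_succ_r HjX; [pose proof (Hmax j Hj HjX)|]; lra.
    + exists i. split; [lia|split; [exact HiX|]].
      intros j [Hj| ->]%Nat.le_succ_r HjX; [exact (Hmax j Hj HjX)|lra].
Qed.

Lemma finite_avoid_dist (g : nat -> R) c n : (forall i, g i <> c) ->
  exists e, 0 < e /\ forall i, (i < n)%nat -> e <= Rabs (g i - c).
Proof.
  intros Hg. induction n as [|n (e & He & Hi)].
  - exists 1. split; [lra|]. intros; lia.
  - assert (0 < Rabs (g n - c)) by (apply Rabs_pos_lt; specialize (Hg n); lra).
    exists (Rmin e (Rabs (g n - c))). split; [apply Rmin_glb_lt; assumption|].
    intros i Hin. destruct (Nat.eq_dec i n) as [->|]; [apply Rmin_r|].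
    pose proof (Rmin_l e (Rabs (g n - c))). pose proof (Hi i ltac:(lia)). lra.
Qed.

Lemma cl_incl (S : R -> Prop) y : S y -> cl S y.
Proof. intros H e He. exists y. split; [exact H|]. rewrite Rminus_diag, Rabs_R0. exact He. Qed.

Lemma cl_closed_interval (S : R -> Prop) l r y :
  (forall z, S z -> l <= z <= r) -> cl S y -> l <= y <= r.
Proof.
  intros HS Hcl. split; apply Rnot_lt_le; intros Hy.
  - destruct (Hcl (l - y)) as (z & Hz & Hd); [lra|]. apply Rabs_def2 in Hd. pose proof (HS z Hz). lra.
  - destruct (Hcl (y - r)) as (z & Hz & Hd); [lra|]. apply Rabs_def2 in Hd. pose proof (HS z Hz). lra.
Qed.

Lemma cl_avoid_open_interval (S : R -> Prop) l r y :
  (forall z, S z -> ~ (l < z < r)) -> cl S y -> ~ (l < y < r).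
Proof.
  intros HS Hcl Hy. destruct (Hcl (Rmin (y - l) (r - y))) as (z & Hz & Hd); [apply Rmin_glb_lt; lra|].
  apply Rabs_def2 in Hd. pose proof (Rmin_l (y - l) (r - y)). pose proof (Rmin_r (y - l) (r - y)).
  apply (HS z Hz). lra.
Qed.

Lemma segment_avoiding_point_one_side u v c :
  (forall t, 0 <= t <= 1 -> u + t * (v - u) <> c) -> (u < c /\ v < c) \/ (c < u /\ c < v).
Proof.
  intros H. assert (Hu : u <> c) by (intros E; apply (H 0); [lra|]; rewrite E; ring).
  assert (Hv : v <> c) by (intros E; apply (H 1); [lra|]; rewrite E; ring).
  destruct (Rlt_dec u c), (Rlt_dec v c); [left; lra| | |right; lra].
  all: exfalso; set (t := (c - u) / (v - u)).
  all: assert (Et : t * (v - u) = c - u) by (unfold t; field; lra).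
  all: apply (H t); [split; nra|lra].
Qed.

Lemma near_point_same_side x y c : Rabs (x - y) < Rabs (y - c) ->
  (x < c /\ y < c) \/ (c < x /\ c < y).
Proof.
  intros H. apply Rabs_def2 in H as [H1 H2]. destruct (Rlt_dec y c).
  - rewrite Rabs_left in * by lra. left. lra.
  - rewrite Rabs_right in * by lra. right. lra.
Qed.

Section PiecewiseAffineMap.

Variables (lam mu : R) (f : R -> R).
Hypothesis Hlam : 0 < lam < 1.
Hypothesis Hmu : 0 < mu < 1.
Hypothesis Hsum : lam + mu > 1.
Local Notation c := ((1 - mu) / lam).
Hypothesis Hf01 : forall x, 0 <= x <= 1 -> 0 <= f x <= 1.
Hypothesis Hf_left : forall x, 0 <= x < c -> f x = lam * x + mu.
Hypothesis Hf_right : forall x, c < x <= 1 -> f x = lam * x + mu - 1.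
Hypothesis Hgap : forall (k : nat) x, f 1 <= x <= f 0 -> iterf f k x <> c.

Lemma lam_c : lam * c = 1 - mu.
Proof. field. lra. Qed.

Lemma c_in_01 : 0 < c < 1.
Proof. pose proof lam_c. split; [apply Rdiv_lt_0_compat|]; nra. Qed.

Lemma f_0 : f 0 = mu.
Proof. pose proof c_in_01. rewrite Hf_left; lra. Qed.

Lemma f_1 : f 1 = lam + mu - 1.
Proof. pose proof c_in_01. rewrite Hf_right; lra. Qed.

Lemma iterf_01 n x : 0 <= x <= 1 -> 0 <= iterf f n x <= 1.
Proof. intros H. induction n; [exact H|]. rewrite iterf_S. apply Hf01, IHn. Qed.

Lemma f_left_range x : 0 <= x < c -> mu <= f x < 1.
Proof. intros H. rewrite Hf_left by exact H. pose proof lam_c. nra. Qed.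

Lemma f_right_range x : c < x <= 1 -> 0 < f x <= lam + mu - 1.
Proof. intros H. rewrite Hf_right by exact H. pose proof lam_c. nra. Qed.

Lemma f_range x : 0 <= x <= 1 -> x <> c -> 0 < f x <= lam + mu - 1 \/ mu <= f x < 1.
Proof.
  intros H Hc. destruct (Rlt_dec x c).
  - right. apply f_left_range. lra.
  - left. apply f_right_range. lra.
Qed.

Lemma f_affine u v : 0 <= u <= 1 -> 0 <= v <= 1 -> (u < c /\ v < c) \/ (c < u /\ c < v) ->
  f v - f u = lam * (v - u).
Proof.
  intros Hu Hv [[? ?]|[? ?]].
  - rewrite !Hf_left by lra. ring.
  - rewrite !Hf_right by lra. ring.
Qed.

Lemma f_inj u v : 0 <= u <= 1 -> 0 <= v <= 1 -> u <> c -> v <> c -> f u = f v -> u = v.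
Proof.
  intros Hu Hv Hcu Hcv E.
  destruct (Rlt_dec u c), (Rlt_dec v c).
  - rewrite !Hf_left in E by lra. nra.
  - pose proof (f_left_range u). pose proof (f_right_range v). lra.
  - pose proof (f_left_range v). pose proof (f_right_range u). lra.
  - rewrite !Hf_right in E by lra. nra.
Qed.

Lemma f_preimage y : 0 < y < 1 -> ~ (lam + mu - 1 < y < mu) ->
  exists x, 0 <= x <= 1 /\ x <> c /\ f x = y.
Proof.
  pose proof lam_c. pose proof c_in_01. intros Hy Hgy. destruct (Rlt_dec y mu).
  - exists ((y - mu + 1) / lam).
    assert (E : lam * ((y - mu + 1) / lam) = y - mu + 1) by (field; lra).
    assert (c < (y - mu + 1) / lam) by (apply (Rmult_lt_reg_l lam); lra).
    assert ((y - mu + 1) / lam <= 1) by (apply (Rmult_le_reg_l lam); lra).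
    split; [lra|split; [lra|]]. rewrite Hf_right by lra. lra.
  - exists ((y - mu) / lam).
    assert (E : lam * ((y - mu) / lam) = y - mu) by (field; lra).
    assert (0 <= (y - mu) / lam) by (apply (Rmult_le_reg_l lam); lra).
    assert ((y - mu) / lam < c) by (apply (Rmult_lt_reg_l lam); lra).
    split; [lra|split; [lra|]]. rewrite Hf_left by lra. lra.
Qed.

Definition regular x := 0 <= x <= 1 /\ forall n, iterf f n x <> c.

Lemma regular_iterf n x : regular x -> regular (iterf f n x).
Proof.
  intros [H01 Hc]. split; [apply iterf_01, H01|]. intros t. rewrite <- iterf_add. apply Hc.
Qed.

Lemma regular_f x : regular x -> regular (f x).
Proof. apply (regular_iterf 1). Qed.

Lemma regular_first_gap x : lam + mu - 1 <= x <= mu -> regular x.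
Proof. intros H. split; [lra|]. intros n. apply Hgap. rewrite f_0, f_1. exact H. Qed.

Lemma regular_0 : regular 0.
Proof.
  pose proof c_in_01. split; [lra|]. intros [|n]; [simpl; lra|].
  rewrite iterf_S_r, f_0. apply regular_first_gap. lra.
Qed.

Lemma regular_1 : regular 1.
Proof.
  pose proof c_in_01. split; [lra|]. intros [|n]; [simpl; lra|].
  rewrite iterf_S_r, f_1. apply regular_first_gap. lra.
Qed.

Lemma iterf_inj n u v : regular u -> regular v -> iterf f n u = iterf f n v -> u = v.
Proof.
  revert u v. induction n as [|n IH]; intros u v Hu Hv E; [exact E|].
  rewrite !iterf_S_r in E. apply (f_inj u v); try apply Hu; try apply Hv.
  - apply (proj2 Hu 0%nat).
  - apply (proj2 Hv 0%nat).
  - apply IH; [apply regular_f, Hu|apply regular_f, Hv|exact E].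
Qed.

Lemma iterf_S_in_open01 n x : regular x -> 0 < iterf f (S n) x < 1.
Proof.
  intros Hx. destruct (regular_iterf n x Hx) as [H01 Hc].
  rewrite iterf_S. destruct (f_range _ H01 (Hc 0%nat)); lra.
Qed.

Lemma f_not_in_first_gap x : 0 <= x <= 1 -> x <> c -> ~ (lam + mu - 1 < f x < mu).
Proof. intros H Hc. destruct (f_range x H Hc); lra. Qed.

(** * Gaps *)

Definition gap_lo k := iterf f k (lam + mu - 1).
Definition gap_hi k := iterf f k mu.
Definition in_gap k z := gap_lo k < z < gap_hi k.

Lemma iterf_first_gap k x : lam + mu - 1 <= x <= mu ->
  iterf f k x = gap_lo k + lam ^ k * (x - (lam + mu - 1)).
Proof.
  revert x. induction k as [|k IH]; intros x Hx; [unfold gap_lo; simpl; ring|].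
  assert (Hside : (gap_lo k < c /\ iterf f k x < c) \/ (c < gap_lo k /\ c < iterf f k x)).
  { apply segment_avoiding_point_one_side. intros t Ht.
    replace (gap_lo k + t * (iterf f k x - gap_lo k))
      with (iterf f k (lam + mu - 1 + t * (x - (lam + mu - 1)))).
    - apply regular_first_gap. split; nra.
    - rewrite !IH by (split; nra). ring. }
  unfold gap_lo at 1. rewrite !iterf_S. fold (gap_lo k).
  assert (Hlo : 0 <= gap_lo k <= 1) by (apply iterf_01; lra).
  pose proof (f_affine (gap_lo k) (iterf f k x) Hlo (iterf_01 k x ltac:(lra)) Hside).
  rewrite IH in * by lra. simpl. nra.
Qed.

Lemma gap_hi_eq k : gap_hi k = gap_lo k + lam ^ k * (1 - lam).
Proof. unfold gap_hi at 1. rewrite iterf_first_gap by lra. ring. Qed.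

Lemma gap_lo_lt_hi k : gap_lo k < gap_hi k.
Proof. rewrite gap_hi_eq. pose proof (pow_lt lam k (proj1 Hlam)). nra. Qed.

Lemma iterf_in_gap k x : lam + mu - 1 < x < mu -> in_gap k (iterf f k x).
Proof.
  intros H. unfold in_gap. rewrite gap_hi_eq, iterf_first_gap by lra.
  pose proof (pow_lt lam k (proj1 Hlam)). split; nra.
Qed.

Lemma in_gap_image k z : in_gap k z -> exists x, lam + mu - 1 < x < mu /\ iterf f k x = z.
Proof.
  unfold in_gap. rewrite gap_hi_eq. intros Hz. pose proof (pow_lt lam k (proj1 Hlam)).
  set (t := (z - gap_lo k) / lam ^ k).
  assert (Et : lam ^ k * t = z - gap_lo k) by (unfold t; field; lra).
  exists (lam + mu - 1 + t).
  assert (0 < t < 1 - lam) by (split; nra).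
  split; [lra|]. rewrite iterf_first_gap by lra. lra.
Qed.

Lemma c_not_in_gap k : ~ in_gap k c.
Proof.
  intros H. destruct (in_gap_image k c H) as (x & Hx & E).
  apply (proj2 (regular_first_gap x ltac:(lra)) k E).
Qed.

Lemma in_gap_f k z : in_gap k z -> in_gap (S k) (f z).
Proof.
  intros H. destruct (in_gap_image k z H) as (x & Hx & <-).
  rewrite <- iterf_S. apply iterf_in_gap, Hx.
Qed.

Lemma in_gap_preimage k u : regular u -> in_gap k (iterf f k u) -> lam + mu - 1 < u < mu.
Proof.
  intros Hu H. destruct (in_gap_image k _ H) as (x & Hx & E).
  replace u with x; [exact Hx|]. apply (iterf_inj k); [apply regular_first_gap; lra|exact Hu|exact E].
Qed.

Lemma iterf_not_in_gap k m x : regular x -> (k < m)%nat -> ~ in_gap k (iterf f m x).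
Proof.
  intros Hx Hkm H. replace m with (k + S (m - S k))%nat in H by lia.
  rewrite iterf_add, iterf_S in H.
  destruct (regular_iterf (m - S k) x Hx) as [H01 Hc].
  apply (f_not_in_first_gap _ H01 (Hc 0%nat)).
  apply (in_gap_preimage k); [apply regular_f; split; assumption|exact H].
Qed.

Lemma gaps_disjoint j k z : j <> k -> in_gap j z -> in_gap k z -> False.
Proof.
  assert (Hlt : forall j k, (j < k)%nat -> in_gap j z -> in_gap k z -> False).
  { clear j k. intros j k Hjk Hj Hk. destruct (in_gap_image k z Hk) as (x & Hx & <-).
    apply (iterf_not_in_gap j k x); [apply regular_first_gap; lra|exact Hjk|exact Hj]. }
  intros Hjk Hj Hk. destruct (Nat.lt_total j k) as [H|[H|H]].
  - exact (Hlt j k H Hj Hk).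
  - exact (Hjk H).
  - exact (Hlt k j H Hk Hj).
Qed.

Lemma gaps_separated j k : j <> k -> gap_hi j <= gap_lo k \/ gap_hi k <= gap_lo j.
Proof.
  intros Hjk. apply disjoint_open_intervals; try apply gap_lo_lt_hi.
  intros z [Hj Hk]. apply (gaps_disjoint j k z Hjk Hj Hk).
Qed.

Lemma gap_lo_not_in_gap j k : ~ in_gap j (gap_lo k).
Proof.
  unfold in_gap. pose proof (gap_lo_lt_hi k). destruct (Nat.eq_dec j k) as [->|Hjk]; [lra|].
  destruct (gaps_separated j k Hjk); lra.
Qed.

Lemma gap_hi_not_in_gap j k : ~ in_gap j (gap_hi k).
Proof.
  unfold in_gap. pose proof (gap_lo_lt_hi k). destruct (Nat.eq_dec j k) as [->|Hjk]; [lra|].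
  destruct (gaps_separated j k Hjk); lra.
Qed.

Lemma gap_lo_orbit_1 k : gap_lo k = iterf f (S k) 1.
Proof. unfold gap_lo. rewrite iterf_S_r, f_1. reflexivity. Qed.

Lemma gap_hi_orbit_0 k : gap_hi k = iterf f (S k) 0.
Proof. unfold gap_hi. rewrite iterf_S_r, f_0. reflexivity. Qed.

Lemma gap_lo_pos k : 0 < gap_lo k.
Proof. rewrite gap_lo_orbit_1. apply iterf_S_in_open01, regular_1. Qed.

Lemma gap_hi_lt_1 k : gap_hi k < 1.
Proof. rewrite gap_hi_orbit_0. apply iterf_S_in_open01, regular_0. Qed.

(* Otherwise, by injectivity, 0 or 1 would be a value of some [f^(n+1)], which lies in (0, 1). *)
Lemma gap_lo_neq_gap_hi j k : gap_lo k <> gap_hi j.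
Proof.
  rewrite gap_lo_orbit_1, gap_hi_orbit_0. intros E.
  destruct (Nat.lt_total k j) as [Hkj|[<-|Hjk]].
  - replace (S j) with (S k + S (j - S k))%nat in E by lia. rewrite iterf_add in E.
    apply iterf_inj in E; [|apply regular_1|apply regular_iterf, regular_0].
    pose proof (iterf_S_in_open01 (j - S k) 0 regular_0). lra.
  - pose proof (gap_lo_lt_hi k). rewrite gap_lo_orbit_1, gap_hi_orbit_0 in H. lra.
  - replace (S k) with (S j + S (k - S j))%nat in E by lia. rewrite iterf_add in E.
    apply iterf_inj in E; [|apply regular_iterf, regular_1|apply regular_0].
    pose proof (iterf_S_in_open01 (k - S j) 1 regular_1). lra.
Qed.

(* A gap-free interval lies on one side of G_0, hence is the image under an affine branch of [f]
   of an interval [1/lam] times longer that avoids one gap fewer. *)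
Lemma gap_free_interval_short m u v : 0 <= u -> v <= 1 ->
  (forall k z, (k < m)%nat -> u < z < v -> ~ in_gap k z) -> v - u <= lam ^ m.
Proof.
  revert u v. induction m as [|m IH]; intros u v Hu Hv Hfree; [simpl; lra|].
  destruct (Rle_dec v u); [pose proof (pow_lt lam (S m) (proj1 Hlam)); lra|].
  assert (Pull : forall u' v', 0 <= u' -> v' <= 1 -> lam * (v' - u') = v - u ->
            (forall z, u' < z < v' -> u < f z < v) -> v - u <= lam ^ S m).
  { intros u' v' Hu' Hv' Elen Hmap.
    assert (v' - u' <= lam ^ m).
    { apply IH; [exact Hu'|exact Hv'|]. intros k z Hk Hz Hg.
      apply (Hfree (S k) (f z)); [lia|apply Hmap, Hz|apply in_gap_f, Hg]. }
    simpl. nra. }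
  assert (Hside : v <= lam + mu - 1 \/ mu <= u).
  { apply disjoint_open_intervals; [lra|lra|]. intros z [Hz Hg].
    apply (Hfree 0%nat z); [lia|exact Hz|exact Hg]. }
  pose proof lam_c. pose proof c_in_01.
  destruct Hside.
  - set (u' := (u + 1 - mu) / lam). set (v' := (v + 1 - mu) / lam).
    assert (Eu : lam * u' = u + 1 - mu) by (unfold u'; field; lra).
    assert (Ev : lam * v' = v + 1 - mu) by (unfold v'; field; lra).
    apply (Pull u' v'); [nra|nra|lra|]. intros z Hz.
    rewrite Hf_right by (split; nra). split; nra.
  - set (u' := (u - mu) / lam). set (v' := (v - mu) / lam).
    assert (Eu : lam * u' = u - mu) by (unfold u'; field; lra).
    assert (Ev : lam * v' = v - mu) by (unfold v'; field; lra).
    apply (Pull u' v'); [nra|nra|lra|]. intros z Hz.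
    rewrite Hf_left by (split; nra). split; nra.
Qed.

Lemma gaps_dense u v : 0 <= u < v -> v <= 1 -> exists k z, u < z < v /\ in_gap k z.
Proof.
  intros Huv Hv. apply NNPP. intros Hno.
  destruct (pow_eventually_lt lam (v - u)) as [N HN]; [lra|lra|].
  enough (v - u <= lam ^ N) by (specialize (HN N (le_n N)); lra).
  apply gap_free_interval_short; [lra|exact Hv|]. intros k z _ Hz Hg. apply Hno. exists k, z. auto.
Qed.

Lemma gap_hi_near_below y e : 0 < y <= 1 -> (forall k, ~ in_gap k y) -> 0 < e ->
  exists k, y - e < gap_hi k <= y.
Proof.
  intros Hy Hn He. destruct (gaps_dense (Rmax 0 (y - e)) y) as (k & z & Hz & Hg).
  - split; [apply Rmax_l|]. apply Rmax_lub_lt; lra.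
  - lra.
  - exists k. pose proof (Rmax_r 0 (y - e)). unfold in_gap in Hg.
    destruct (Rle_dec (gap_hi k) y); [lra|]. exfalso. apply (Hn k). unfold in_gap. lra.
Qed.

Lemma gap_lo_near_above y e : 0 <= y < 1 -> (forall k, ~ in_gap k y) -> 0 < e ->
  exists k, y <= gap_lo k < y + e.
Proof.
  intros Hy Hn He. destruct (gaps_dense y (Rmin 1 (y + e))) as (k & z & Hz & Hg).
  - split; [lra|]. apply Rmin_glb_lt; lra.
  - apply Rmin_l.
  - exists k. pose proof (Rmin_r 1 (y + e)). unfold in_gap in Hg.
    destruct (Rle_dec y (gap_lo k)); [lra|]. exfalso. apply (Hn k). unfold in_gap. lra.
Qed.

(** * The attractor *)

Local Notation cs := (pts2 c).
Local Notation A := (atomset 2 cs f).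

Definition ext (i : nat) (x : R) : R := if Nat.eqb i 1 then lam * x + mu else lam * x + mu - 1.

Lemma ext_1_c : ext 1 c = 1.
Proof. pose proof lam_c. unfold ext. simpl. lra. Qed.

Lemma ext_2_c : ext 2 c = 0.
Proof. pose proof lam_c. unfold ext. simpl. lra. Qed.

Lemma ext_sub i x y : ext i y - ext i x = lam * (y - x).
Proof. unfold ext. destruct (Nat.eqb i 1); ring. Qed.

Lemma Xp_1 x : Xp 2 cs 1 x <-> 0 <= x < c.
Proof. reflexivity. Qed.

Lemma Xp_2 x : Xp 2 cs 2 x <-> c < x <= 1.
Proof. reflexivity. Qed.

Lemma Xp_01 i x : Xp 2 cs i x -> 0 <= x <= 1 /\ x <> c.
Proof.
  pose proof c_in_01. destruct i as [|[|[|i]]]; unfold Xp; simpl; intros; lra.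
Qed.

Lemma exts_ext : exts 2 cs f ext.
Proof.
  intros i Hi. split.
  - intros x Hx. destruct (Nat.eq_dec i 1) as [->|]; [|replace i with 2%nat in * by lia].
    + symmetry. apply Hf_left, Hx.
    + symmetry. apply Hf_right, Hx.
  - intros x _ e He. exists e. split; [exact He|]. intros y _ Hy.
    rewrite ext_sub, Rabs_mult, Rabs_pos_eq by lra. pose proof (Rabs_pos (y - x)). nra.
Qed.

Definition is_word n (w : list nat) := length w = n /\ Forall (fun i => (1 <= i <= 2)%nat) w.

Lemma is_word_snoc n w i : is_word n w -> (1 <= i <= 2)%nat -> is_word (S n) (w ++ i :: nil).
Proof.
  intros [Hl Hf] Hi. split.
  - rewrite length_app, Hl. simpl. lia.
  - apply Forall_app. split; [exact Hf|]. constructor; [exact Hi|constructor].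
Qed.

Lemma atomset_snoc w i : A (w ++ i :: nil) = Fset 2 cs f i (A w).
Proof. unfold atomset. rewrite fold_left_app. reflexivity. Qed.

Definition avoids_first_gaps n y := 0 <= y <= 1 /\ forall k, (k < n)%nat -> ~ in_gap k y.

Lemma avoids_first_gaps_cl n (S : R -> Prop) y :
  (forall z, S z -> avoids_first_gaps n z) -> cl S y -> avoids_first_gaps n y.
Proof.
  intros HS Hcl. split.
  - apply (cl_closed_interval S); [|exact Hcl]. intros z Hz. apply (HS z Hz).
  - intros k Hk. apply (cl_avoid_open_interval S); [|exact Hcl].
    intros z Hz. apply (HS z Hz), Hk.
Qed.

Lemma avoids_first_gaps_f n x : avoids_first_gaps n x -> x <> c -> avoids_first_gaps (S n) (f x).
Proof.
  intros [Hx Hn] Hc. split; [apply Hf01, Hx|]. intros [|k] Hk Hg.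
  - apply (f_not_in_first_gap x Hx Hc Hg).
  - destruct (in_gap_image (S k) _ Hg) as (x' & Hx' & E). rewrite iterf_S in E.
    destruct (regular_iterf k x' (regular_first_gap x' ltac:(lra))) as [H01 Hc'].
    apply f_inj in E; [|exact H01|exact Hx|apply (Hc' 0%nat)|exact Hc].
    apply (Hn k); [lia|]. rewrite <- E. apply iterf_in_gap, Hx'.
Qed.

Lemma avoids_first_gaps_f_inv n x : 0 <= x <= 1 -> avoids_first_gaps (S n) (f x) ->
  avoids_first_gaps n x.
Proof.
  intros Hx [_ Hn]. split; [exact Hx|]. intros k Hk Hg.
  apply (Hn (S k)); [lia|apply in_gap_f, Hg].
Qed.

Lemma atom_avoids_first_gaps w y : A w y -> avoids_first_gaps (length w) y.
Proof.
  revert y. induction w as [|i w IH] using rev_ind; intros y Hy.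
  - split; [exact Hy|]. simpl. intros; lia.
  - rewrite atomset_snoc in Hy. rewrite length_app, Nat.add_1_r.
    eapply avoids_first_gaps_cl; [|exact Hy].
    intros z (x & Hx & Hxi & ->). apply avoids_first_gaps_f; [apply IH, Hx|apply (Xp_01 i x Hxi)].
Qed.

Definition side y : nat := if Rlt_dec y c then 1%nat else 2%nat.

Definition itinerary n z := map (fun j => side (iterf f j z)) (seq 0 n).

Lemma itinerary_S n z : itinerary (S n) z = itinerary n z ++ side (iterf f n z) :: nil.
Proof. unfold itinerary. rewrite seq_S, map_app. reflexivity. Qed.

Lemma side_range y : (1 <= side y <= 2)%nat.
Proof. unfold side. destruct (Rlt_dec y c); lia. Qed.

Lemma itinerary_is_word n z : is_word n (itinerary n z).
Proof.
  induction n as [|n IH]; [split; [reflexivity|constructor]|].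
  rewrite itinerary_S. apply is_word_snoc; [exact IH|apply side_range].
Qed.

Lemma Xp_side y : 0 <= y <= 1 -> y <> c -> Xp 2 cs (side y) y.
Proof.
  intros H Hc. unfold side. destruct (Rlt_dec y c); [apply Xp_1|apply Xp_2]; lra.
Qed.

Lemma atom_snoc_side w x : A w x -> 0 <= x <= 1 -> x <> c -> A (w ++ side x :: nil) (f x).
Proof.
  intros Hw Hx Hc. rewrite atomset_snoc. apply cl_incl. exists x.
  split; [exact Hw|split; [apply Xp_side; assumption|reflexivity]].
Qed.

Lemma iterf_in_itinerary_atom n z : 0 <= z <= 1 ->
  (forall j, (j < n)%nat -> iterf f j z <> c) -> A (itinerary n z) (iterf f n z).
Proof.
  intros Hz. induction n as [|n IH]; intros Hc; [exact Hz|].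
  rewrite itinerary_S, iterf_S. apply atom_snoc_side.
  - apply IH. intros j Hj. apply Hc. lia.
  - apply iterf_01, Hz.
  - apply Hc. lia.
Qed.

Lemma iterf_locally_affine n z0 : 0 <= z0 <= 1 -> (forall j, (j < n)%nat -> iterf f j z0 <> c) ->
  exists rho, 0 < rho /\ forall z, 0 <= z <= 1 -> Rabs (z - z0) < rho ->
    iterf f n z - iterf f n z0 = lam ^ n * (z - z0) /\
    forall j, (j < n)%nat -> side (iterf f j z) = side (iterf f j z0) /\ iterf f j z <> c.
Proof.
  intros Hz0. induction n as [|n IH]; intros Hc.
  - exists 1. split; [lra|]. intros z _ _. split; [simpl; ring|intros; lia].
  - destruct IH as (rho & Hrho & Hloc); [intros j Hj; apply Hc; lia|].
    set (d := Rabs (iterf f n z0 - c)).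
    assert (Hd : 0 < d) by (apply Rabs_pos_lt; specialize (Hc n ltac:(lia)); lra).
    exists (Rmin rho d). split; [apply Rmin_glb_lt; assumption|]. intros z Hz Hzr.
    pose proof (Rmin_l rho d). pose proof (Rmin_r rho d).
    destruct (Hloc z Hz) as [En Hsides]; [lra|].
    assert (Hsame : (iterf f n z < c /\ iterf f n z0 < c) \/ (c < iterf f n z /\ c < iterf f n z0)).
    { apply near_point_same_side. rewrite En, Rabs_mult, Rabs_pos_eq by (apply pow_le; lra).
      pose proof (pow_le_1 lam n ltac:(lra)). pose proof (Rabs_pos (z - z0)). fold d. nra. }
    split.
    + rewrite !iterf_S, f_affine; [rewrite En; simpl; ring|apply iterf_01, Hz0|apply iterf_01, Hz|].
      destruct Hsame; [left|right]; lra.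
    + intros j Hj. destruct (Nat.eq_dec j n) as [->|]; [|apply Hsides; lia].
      unfold side. destruct (Rlt_dec (iterf f n z) c), (Rlt_dec (iterf f n z0) c);
        split; solve [reflexivity|lra].
Qed.

Lemma c_preimage n : exists z, 0 < z < 1 /\ iterf f n z = c /\
  forall j, (j < n)%nat -> iterf f j z <> c.
Proof.
  induction n as [|n (z & Hz & Ez & Hbefore)].
  - exists c. split; [apply c_in_01|split; [reflexivity|intros; lia]].
  - assert (Hout : ~ (lam + mu - 1 < z < mu))
      by (intros H; apply (proj2 (regular_first_gap z ltac:(lra)) n Ez)).
    destruct (f_preimage z Hz Hout) as (x & Hx & Hxc & Efx).
    assert (Hx0 : x <> 0)
      by (intros ->; apply (proj2 regular_0 (S n)); rewrite iterf_S_r, Efx; exact Ez).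
    assert (Hx1 : x <> 1)
      by (intros ->; apply (proj2 regular_1 (S n)); rewrite iterf_S_r, Efx; exact Ez).
    exists x. split; [lra|]. split; [rewrite iterf_S_r, Efx; exact Ez|].
    intros [|j] Hj; [exact Hxc|]. rewrite iterf_S_r, Efx. apply Hbefore. lia.
Qed.

(* Near a point [z0] with [f^n z0 = c] and earlier iterates off [c], [f^n] is affine and keeps the
   itinerary of [z0]. *)
Lemma atom_nbhd_c n : exists d, 0 < d /\ exists w, is_word n w /\
  forall y, c - d < y < c + d -> A w y.
Proof.
  destruct (c_preimage n) as (z0 & Hz0 & Ez0 & Hbefore).
  destruct (iterf_locally_affine n z0 ltac:(lra) Hbefore) as (rho & Hrho & Hloc).
  destruct (exists_pos_le3 rho z0 (1 - z0)) as (r & Hr & Hr1 & Hr2 & Hr3); [lra|lra|lra|].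
  pose proof (pow_lt lam n (proj1 Hlam)).
  exists (lam ^ n * r). split; [nra|]. exists (itinerary n z0). split; [apply itinerary_is_word|].
  intros y Hy. set (t := (y - c) / lam ^ n).
  assert (Et : lam ^ n * t = y - c) by (unfold t; field; lra).
  assert (Ht : - r < t < r) by (split; nra).
  assert (Hz : 0 <= z0 + t <= 1) by lra.
  destruct (Hloc (z0 + t) Hz) as [En Hsides]; [apply Rabs_def1; lra|].
  replace y with (iterf f n (z0 + t)) by (rewrite Ez0 in En; lra).
  replace (itinerary n z0) with (itinerary n (z0 + t)).
  - apply iterf_in_itinerary_atom; [exact Hz|]. intros j Hj. apply Hsides, Hj.
  - apply map_ext_in. intros j Hj. apply in_seq in Hj. apply Hsides. lia.
Qed.

Lemma ext_c_in_atom w i d : (i = 1 \/ i = 2)%nat -> 0 < d ->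
  (forall y, c - d < y < c + d -> A w y) -> A (w ++ i :: nil) (ext i c).
Proof.
  intros Hi Hd Hw. pose proof c_in_01. pose proof lam_c.
  rewrite atomset_snoc. intros e He. destruct Hi as [->| ->].
  - destruct (exists_pos_le3 (d / 2) e c) as (t & Ht & Htd & Hte & Htc); [lra|exact He|lra|].
    exists (f (c - t)). split.
    + exists (c - t). split; [apply Hw; lra|split; [apply Xp_1; lra|reflexivity]].
    + rewrite Hf_left by lra. unfold ext. simpl. apply Rabs_def1; nra.
  - destruct (exists_pos_le3 (d / 2) e (1 - c)) as (t & Ht & Htd & Hte & Htc); [lra|exact He|lra|].
    exists (f (c + t)). split.
    + exists (c + t). split; [apply Hw; lra|split; [apply Xp_2; lra|reflexivity]].
    + rewrite Hf_right by lra. unfold ext. simpl. apply Rabs_def1; nra.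
Qed.

Lemma avoids_first_gaps_in_atom n y : avoids_first_gaps n y -> exists w, is_word n w /\ A w y.
Proof.
  revert y. induction n as [|n IH]; intros y Hy.
  - exists nil. split; [split; [reflexivity|constructor]|apply Hy].
  - destruct (atom_nbhd_c n) as (d & Hd & wc & Hwc & Hnbhd).
    destruct (Req_dec y 1) as [->|Hy1]; [|destruct (Req_dec y 0) as [->|Hy0]].
    + exists (wc ++ 1%nat :: nil). split; [apply is_word_snoc; [exact Hwc|lia]|].
      pose proof (ext_c_in_atom wc 1 d ltac:(lia) Hd Hnbhd) as Hin. rewrite ext_1_c in Hin. exact Hin.
    + exists (wc ++ 2%nat :: nil). split; [apply is_word_snoc; [exact Hwc|lia]|].
      pose proof (ext_c_in_atom wc 2 d ltac:(lia) Hd Hnbhd) as Hin. rewrite ext_2_c in Hin. exact Hin.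
    + destruct Hy as [Hy01 Hgaps].
      assert (Hout : ~ (lam + mu - 1 < y < mu)) by (intros Hg; apply (Hgaps 0%nat); [lia|exact Hg]).
      destruct (f_preimage y ltac:(lra) Hout) as (x & Hx & Hxc & <-).
      destruct (IH x) as (w & Hw & HAw);
        [apply avoids_first_gaps_f_inv; [exact Hx|split; assumption]|].
      exists (w ++ side x :: nil). split; [apply is_word_snoc; [exact Hw|apply side_range]|].
      apply atom_snoc_side; assumption.
Qed.

Definition gap_free y := 0 <= y <= 1 /\ forall k, ~ in_gap k y.

Lemma Lambda_iff y : Lambda 2 cs f y <-> gap_free y.
Proof.
  split.
  - intros HL. split.
    + destruct (HL 1%nat (le_n 1)) as (w & _ & Hw). apply (atom_avoids_first_gaps w y Hw).
    + intros k. destruct (HL (S k)) as (w & (Hlen & _) & Hw); [lia|].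
      apply (atom_avoids_first_gaps w y Hw). rewrite Hlen. lia.
  - intros [H01 Hk] n _.
    destruct (avoids_first_gaps_in_atom n y) as (w & [Hlen Hlet] & Hw);
      [split; [exact H01|intros; apply Hk]|].
    exists w. split; [split; [exact Hlen|split; [exact Hlet|exists y; exact Hw]]|exact Hw].
Qed.

(** * Returns of regular orbits to [c] *)

(* A [gap_hi k = f^(k+1) 0] closer to [c] than [f^0 0, ..., f^(T-1) 0] has [k + 1 >= T]. *)
Lemma orbit_0_near_c_late T e : 0 < e -> exists i, (T <= i)%nat /\ Rabs (iterf f i 0 - c) < e.
Proof.
  intros He. pose proof c_in_01.
  destruct (finite_avoid_dist (fun i => iterf f i 0) c T (proj2 regular_0)) as (eta & Heta & Hmin).
  destruct (gap_hi_near_below c (Rmin eta e)) as (k & Hk);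
    [lra|intros k; apply c_not_in_gap|apply Rmin_glb_lt; assumption|].
  pose proof (Rmin_l eta e). pose proof (Rmin_r eta e).
  assert (Hneq : gap_hi k <> c) by (rewrite gap_hi_orbit_0; apply (proj2 regular_0)).
  assert (Hdist : Rabs (gap_hi k - c) < Rmin eta e) by (apply Rabs_def1; lra).
  exists (S k). rewrite <- gap_hi_orbit_0. split; [|lra].
  destruct (Nat.le_gt_cases T (S k)) as [|Hlt]; [assumption|].
  specialize (Hmin (S k) Hlt). simpl in Hmin. rewrite <- iterf_S, <- gap_hi_orbit_0 in Hmin. lra.
Qed.

Lemma f_pullback_order u v : 0 <= u <= 1 -> 0 <= v <= 1 -> u <> c -> v <> c -> f u <= f v ->
  (forall z, f u < z < f v -> ~ in_gap 0 z) ->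
  u <= v /\ ((u < c /\ v < c) \/ (c < u /\ c < v)).
Proof.
  intros Hu Hv Hcu Hcv Hle Hfree.
  assert (Hside : (u < c /\ v < c) \/ (c < u /\ c < v)).
  { destruct (Rlt_dec u c), (Rlt_dec v c); [left; lra| | |right; lra]; exfalso.
    - pose proof (f_left_range u). pose proof (f_right_range v). lra.
    - pose proof (f_left_range v). pose proof (f_right_range u).
      apply (Hfree ((lam + mu - 1 + mu) / 2)); [lra|]. unfold in_gap, gap_lo, gap_hi. simpl. lra. }
  split; [|exact Hside]. pose proof (f_affine u v Hu Hv Hside). nra.
Qed.

Lemma gap_free_pullback e K u v : regular u -> regular v -> iterf f e u <= iterf f e v ->
  (forall k z, (k < K + e)%nat -> iterf f e u < z < iterf f e v -> ~ in_gap k z) ->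
  u <= v /\ (forall k z, (k < K)%nat -> u < z < v -> ~ in_gap k z) /\
  iterf f e v - iterf f e u = lam ^ e * (v - u).
Proof.
  revert u v K. induction e as [|e IH]; intros u v K Hu Hv Hle Hfree.
  - split; [exact Hle|]. split; [|simpl; ring]. intros k z Hk. apply Hfree. lia.
  - rewrite !iterf_S_r in *.
    destruct (IH (f u) (f v) (S K)) as (Hle' & Hfree' & Hscale);
      [apply regular_f, Hu|apply regular_f, Hv|exact Hle|intros k z Hk; apply Hfree; lia|].
    destruct Hu as [Hu Hcu]. destruct Hv as [Hv Hcv].
    destruct (f_pullback_order u v Hu Hv (Hcu 0%nat) (Hcv 0%nat) Hle') as [Huv Hside];
      [intros z Hz; apply Hfree'; [lia|exact Hz]|].
    pose proof (f_affine u v Hu Hv Hside) as Ef.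
    split; [exact Huv|split].
    + intros k z Hk Hz Hg. apply (Hfree' (S k) (f z)); [lia| |apply in_gap_f, Hg].
      pose proof (f_affine u z Hu ltac:(lra) ltac:(destruct Hside; [left|right]; lra)).
      pose proof (f_affine z v ltac:(lra) Hv ltac:(destruct Hside; [left|right]; lra)).
      split; nra.
    + rewrite Hscale, Ef. simpl. ring.
Qed.

(* Take the largest [f^i 0], [i <= m], below [f^m x]: no gap [G_k], [k < m], lies between them,
   since [f^m x] is in none and the right end of [G_k] is [f^(k+1) 0]. *)
Lemma regular_orbit_shadows_orbit_0 x m : regular x -> exists i, (i <= m)%nat /\
  forall r, (r <= i)%nat -> 0 <= iterf f (m - r) x - iterf f (i - r) 0 <= lam ^ (m - r).
Proof.
  intros Hx. pose proof (iterf_01 m x (proj1 Hx)).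
  destruct (exists_argmax_below (fun i => iterf f i 0) m (iterf f m x)) as (i & Him & Hle & Hmax);
    [simpl; lra|].
  assert (Hfree : forall k z, (k < m)%nat -> iterf f i 0 < z < iterf f m x -> ~ in_gap k z).
  { intros k z Hk Hz Hg. apply (iterf_not_in_gap k m x Hx Hk). unfold in_gap in *.
    destruct (Rle_dec (gap_hi k) (iterf f m x)) as [Hhi|]; [|lra].
    rewrite gap_hi_orbit_0 in *. pose proof (Hmax (S k) Hk Hhi). lra. }
  assert (Hlen : iterf f m x - iterf f i 0 <= lam ^ m)
    by (apply gap_free_interval_short; [apply iterf_01; lra|lra|exact Hfree]).
  exists i. split; [exact Him|]. intros r Hr.
  assert (Ei : iterf f r (iterf f (i - r) 0) = iterf f i 0)
    by (rewrite <- iterf_add; f_equal; lia).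
  assert (Em : iterf f r (iterf f (m - r) x) = iterf f m x)
    by (rewrite <- iterf_add; f_equal; lia).
  destruct (gap_free_pullback r 0 (iterf f (i - r) 0) (iterf f (m - r) x)) as (Hord & _ & Hscale).
  - apply regular_iterf, regular_0.
  - apply regular_iterf, Hx.
  - rewrite Ei, Em. exact Hle.
  - rewrite Ei, Em. intros k z Hk. apply Hfree. lia.
  - rewrite Ei, Em in Hscale. split; [lra|].
    replace m with (r + (m - r))%nat in Hlen at 2 by lia. rewrite pow_add in Hlen.
    pose proof (pow_lt lam r (proj1 Hlam)). nra.
Qed.

(* Shadowing the orbit of [0], the orbit of [x] either passes near [f^i0 0], which is close to [c],
   or comes close to [0] (below [mu]), hence one step earlier close to [c] from the right. *)
Lemma regular_orbit_near_c x d T : regular x -> 0 < d ->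
  exists s, (T <= s)%nat /\ Rabs (iterf f s x - c) < d.
Proof.
  intros Hx Hd. pose proof lam_c.
  destruct (pow_eventually_lt lam (Rmin (d / 2) mu)) as [N HN];
    [lra|apply Rmin_glb_lt; lra|].
  set (T' := Nat.max T N).
  assert (HT' : lam ^ T' < Rmin (d / 2) mu) by (apply HN; lia).
  pose proof (Rmin_l (d / 2) mu). pose proof (Rmin_r (d / 2) mu).
  destruct (orbit_0_near_c_late T' (d / 2)) as (i0 & Hi0 & Hc0); [lra|].
  destruct (regular_orbit_shadows_orbit_0 x (i0 + T') Hx) as (i & Him & Hshadow).
  destruct (Nat.le_gt_cases i0 i) as [Hle|Hlt].
  - specialize (Hshadow (i - i0)%nat ltac:(lia)).
    replace (i - (i - i0))%nat with i0 in Hshadow by lia.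
    pose proof (pow_antimono lam T' (i0 + T' - (i - i0)) ltac:(lra) ltac:(lia)).
    exists (i0 + T' - (i - i0))%nat. split; [lia|].
    apply Rabs_def2 in Hc0. apply Rabs_def1; lra.
  - specialize (Hshadow i (le_n i)). rewrite Nat.sub_diag in Hshadow. simpl in Hshadow.
    set (s := (i0 + T' - i - 1)%nat).
    replace (i0 + T' - i)%nat with (S s) in Hshadow by lia.
    destruct (regular_iterf s x Hx) as [Hs01 Hsc].
    pose proof (pow_antimono lam T' s ltac:(lra) ltac:(lia)).
    assert (Hright : c < iterf f s x).
    { destruct (Rlt_dec (iterf f s x) c); [|specialize (Hsc 0%nat); simpl in Hsc; lra].
      rewrite iterf_S, Hf_left in Hshadow by lra. simpl in Hshadow. nra. }
    rewrite iterf_S, Hf_right in Hshadow by lra. simpl in Hshadow.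
    exists s. split; [lia|]. rewrite Rabs_pos_eq by lra. nra.
Qed.

(* If the orbit lands just left of [c], the next point is just below [1], and the orbit of [1]
   reaches [gap_lo k], just right of [c], while staying affine near [1]. *)
Lemma regular_orbit_near_c_right x d T : regular x -> 0 < d ->
  exists s, (T <= s)%nat /\ c < iterf f s x < c + d.
Proof.
  intros Hx Hd. pose proof lam_c. pose proof c_in_01.
  destruct (gap_lo_near_above c d) as (k & Hk); [lra|intros k; apply c_not_in_gap|exact Hd|].
  assert (Hkc : gap_lo k <> c) by (rewrite gap_lo_orbit_1; apply (proj2 regular_1)).
  destruct (iterf_locally_affine (S k) 1 ltac:(lra) (fun j _ => proj2 regular_1 j))
    as (rho & Hrho & Hloc).
  destruct (exists_pos_le3 rho (gap_lo k - c) d) as (d' & Hd' & Hd'1 & Hd'2 & Hd'3); [lra|lra|lra|].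
  destruct (regular_orbit_near_c x d' T Hx ltac:(lra)) as (s & Hs & Hnear).
  apply Rabs_def2 in Hnear.
  destruct (Rlt_dec c (iterf f s x)); [exists s; split; [exact Hs|lra]|].
  assert (Hsc : iterf f s x < c) by (pose proof (proj2 Hx s); lra).
  set (y := iterf f (S s) x).
  assert (Ey : y = lam * iterf f s x + mu)
    by (unfold y; rewrite iterf_S; apply Hf_left; split; [apply iterf_01, Hx|exact Hsc]).
  destruct (Hloc y) as [Eaff _]; [apply iterf_01, Hx|apply Rabs_def1; nra|].
  rewrite <- gap_lo_orbit_1 in Eaff.
  pose proof (pow_lt lam (S k) (proj1 Hlam)). pose proof (pow_le_1 lam (S k) ltac:(lra)).
  assert (Hy : 0 < 1 - y < d') by (split; nra).
  exists (S k + S s)%nat. split; [lia|]. rewrite iterf_add. fold y. split; nra.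
Qed.

Lemma regular_orbit_near_c_left x d T : regular x -> 0 < d ->
  exists s, (T <= s)%nat /\ c - d < iterf f s x < c.
Proof.
  intros Hx Hd. pose proof lam_c. pose proof c_in_01.
  destruct (gap_hi_near_below c d) as (k & Hk); [lra|intros k; apply c_not_in_gap|exact Hd|].
  assert (Hkc : gap_hi k <> c) by (rewrite gap_hi_orbit_0; apply (proj2 regular_0)).
  destruct (iterf_locally_affine (S k) 0 ltac:(lra) (fun j _ => proj2 regular_0 j))
    as (rho & Hrho & Hloc).
  destruct (exists_pos_le3 rho (c - gap_hi k) d) as (d' & Hd' & Hd'1 & Hd'2 & Hd'3); [lra|lra|lra|].
  destruct (regular_orbit_near_c x d' T Hx ltac:(lra)) as (s & Hs & Hnear).
  apply Rabs_def2 in Hnear.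
  destruct (Rlt_dec (iterf f s x) c); [exists s; split; [exact Hs|lra]|].
  assert (Hsc : c < iterf f s x) by (pose proof (proj2 Hx s); lra).
  set (y := iterf f (S s) x).
  assert (Ey : y = lam * iterf f s x + mu - 1)
    by (unfold y; rewrite iterf_S; apply Hf_right; split; [exact Hsc|apply iterf_01, Hx]).
  destruct (Hloc y) as [Eaff _]; [apply iterf_01, Hx|apply Rabs_def1; nra|].
  rewrite <- gap_hi_orbit_0 in Eaff.
  pose proof (pow_lt lam (S k) (proj1 Hlam)). pose proof (pow_le_1 lam (S k) ltac:(lra)).
  assert (Hy : 0 < y < d') by (split; nra).
  exists (S k + S s)%nat. split; [lia|]. rewrite iterf_add. fold y. split; nra.
Qed.

(** * Properties P1-P6 *)

Lemma Xtilde_iff_regular y : Xtilde 2 cs f y <-> regular y.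
Proof.
  split.
  - intros H. split; [apply (H 0%nat)|]. intros n E.
    apply (proj2 (H n)). exists 1%nat. split; [lia|exact E].
  - intros [H01 Hc] n. split; [apply iterf_01, H01|]. intros (i & Hi & E).
    replace i with 1%nat in E by (simpl in Hi; lia). apply (Hc n E).
Qed.

Lemma gap_lo_in_Lambda k : Lambda 2 cs f (gap_lo k).
Proof. apply Lambda_iff. split; [apply iterf_01; lra|intros j; apply gap_lo_not_in_gap]. Qed.

Lemma gap_hi_in_Lambda k : Lambda 2 cs f (gap_hi k).
Proof. apply Lambda_iff. split; [apply iterf_01; lra|intros j; apply gap_hi_not_in_gap]. Qed.

Lemma f_discontinuous_at_c : ~ cont_within (Xall 2 cs) f c.
Proof.
  pose proof c_in_01. pose proof lam_c. intros Hcont.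
  destruct (Hcont ((1 - lam) / 2)) as (delta & Hdelta & Hclose); [lra|].
  destruct (exists_pos_le3 (delta / 2) c (1 - c)) as (t & Ht & Htd & Htc & Htc'); [lra|lra|lra|].
  assert (Hl : Rabs (f (c - t) - f c) < (1 - lam) / 2)
    by (apply Hclose; [unfold Xall; simpl; lra|apply Rabs_def1; lra]).
  assert (Hr : Rabs (f (c + t) - f c) < (1 - lam) / 2)
    by (apply Hclose; [unfold Xall; simpl; lra|apply Rabs_def1; lra]).
  rewrite Hf_left in Hl by lra. rewrite Hf_right in Hr by lra.
  apply Rabs_def2 in Hl. apply Rabs_def2 in Hr. nra.
Qed.

Lemma P1_holds : P1 2 cs f lam.
Proof.
  split; [intros x Hx; apply Hf01, Hx|]. split.
  { intros i Hi. replace i with 1%nat by (simpl in Hi; lia). apply f_discontinuous_at_c. }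
  split; [|split; [exact Hlam|]].
  - exists lam. split; [lra|]. intros i Hi x y Hx Hy.
    destruct (exts_ext i Hi) as [Ex _].
    rewrite <- (Ex x Hx), <- (Ex y Hy), ext_sub, Rabs_mult, Rabs_pos_eq by lra. lra.
  - intros i Hi. exists (ext i 0). intros x Hx.
    destruct (exts_ext i Hi) as [Ex _]. rewrite <- (Ex x Hx).
    pose proof (ext_sub i 0 x). lra.
Qed.

Lemma P2_holds : P2 2 cs f.
Proof.
  pose proof lam_c. exists ext. split; [exact exts_ext|split].
  - intros i Hi x y _ _ E. pose proof (ext_sub i x y) as Hsub. rewrite E in Hsub. nra.
  - intros i j Hi Hj Hij x y Hx Hy. unfold Xcl in *.
    destruct (Nat.eq_dec i 1) as [->|]; [|replace i with 2%nat in * by lia];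
      (destruct (Nat.eq_dec j 1) as [->|]; [|replace j with 2%nat in * by lia]);
      try congruence; simpl in *; unfold ext; simpl; nra.
Qed.

Lemma Lambda_perfect y e : Lambda 2 cs f y -> 0 < e ->
  exists z, Lambda 2 cs f z /\ z <> y /\ Rabs (z - y) < e.
Proof.
  intros Hy He. apply Lambda_iff in Hy as [Hy01 Hygaps].
  assert (Below : 0 < y -> exists k, y - e < gap_hi k <= y)
    by (intros; apply gap_hi_near_below; auto; lra).
  assert (Above : y < 1 -> exists k, y <= gap_lo k < y + e)
    by (intros; apply gap_lo_near_above; auto; lra).
  destruct (Req_dec y 0) as [->|Hy0]; [|destruct (Req_dec y 1) as [->|Hy1]].
  - destruct Above as (k & Hk); [lra|]. pose proof (gap_lo_pos k).
    exists (gap_lo k). split; [apply gap_lo_in_Lambda|split; [lra|apply Rabs_def1; lra]].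
  - destruct Below as (k & Hk); [lra|]. pose proof (gap_hi_lt_1 k).
    exists (gap_hi k). split; [apply gap_hi_in_Lambda|split; [lra|apply Rabs_def1; lra]].
  - destruct Below as (k & Hk); [lra|]. destruct Above as (j & Hj); [lra|].
    destruct (Req_dec (gap_hi k) y) as [E|].
    + exists (gap_lo j). split; [apply gap_lo_in_Lambda|split; [|apply Rabs_def1; lra]].
      rewrite <- E. apply gap_lo_neq_gap_hi.
    + exists (gap_hi k). split; [apply gap_hi_in_Lambda|split; [assumption|apply Rabs_def1; lra]].
Qed.

Lemma P3_holds : P3 2 cs f.
Proof.
  pose proof c_in_01. split; [|split; [|split; [|split]]].
  - exists 0. apply Lambda_iff. split; [lra|].
    intros k Hk. pose proof (gap_lo_pos k). unfold in_gap in Hk. lra.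
  - intros y Hcl. apply Lambda_iff. split.
    + apply (cl_closed_interval (Lambda 2 cs f)); [|exact Hcl]. intros z Hz. apply Lambda_iff, Hz.
    + intros k. apply (cl_avoid_open_interval (Lambda 2 cs f)); [|exact Hcl].
      intros z Hz. apply Lambda_iff, Hz.
  - exists 1. intros y Hy. apply Lambda_iff in Hy. rewrite Rabs_pos_eq; apply Hy.
  - intros y Hy e He. apply Lambda_perfect; assumption.
  - intros u v Hu Hv Huv. apply Lambda_iff in Hu as [Hu _]. apply Lambda_iff in Hv as [Hv _].
    destruct (gaps_dense u v) as (k & z & Hz & Hg); [lra|lra|].
    exists z. split; [exact Hz|]. intros HL. apply Lambda_iff in HL. apply (proj2 HL k Hg).
Qed.

Lemma P4_holds : P4 2 cs f.
Proof.
  exists ext. split; [exact exts_ext|]. intros i Hi. replace i with 1%nat by (simpl in Hi; lia).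
  simpl. rewrite ext_1_c, ext_2_c. split; apply Xtilde_iff_regular; [apply regular_1|apply regular_0].
Qed.

Lemma P5_holds : P5 2 cs f.
Proof.
  exists ext. split; [exact exts_ext|]. exists 1%nat. split; [simpl; lia|]. right. simpl.
  rewrite ext_2_c. intros y Hy. apply Lambda_iff in Hy as [Hy01 Hygaps].
  destruct (Req_dec y 0) as [->|Hy0].
  - apply cl_incl. exists 0%nat. reflexivity.
  - intros e He. destruct (gap_hi_near_below y e) as (k & Hk); [lra|exact Hygaps|exact He|].
    exists (gap_hi k). split; [exists (S k); apply gap_hi_orbit_0|apply Rabs_def1; lra].
Qed.

Lemma P6_holds : P6 2 cs f.
Proof.
  intros x Hx i Hi. replace i with 1%nat by (simpl in Hi; lia).
  apply Xtilde_iff_regular in Hx. split; [simpl; lia|]. intros n Hn.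
  destruct (atom_nbhd_c n) as (d & Hd & w & [Hlen Hlet] & Hnbhd).
  exists w. split; [split; [exact Hlen|split; [exact Hlet|exists c; apply Hnbhd; lra]]|].
  split; [apply Hnbhd; simpl; lra|split].
  - destruct (regular_orbit_near_c_left x d n Hx Hd) as (s & Hs & Hnear).
    exists (s - n)%nat. replace (s - n + n)%nat with s by lia.
    split; [apply Hnbhd; lra|]. apply Xp_1. pose proof (iterf_01 s x (proj1 Hx)). lra.
  - destruct (regular_orbit_near_c_right x d n Hx Hd) as (s & Hs & Hnear).
    exists (s - n)%nat. replace (s - n + n)%nat with s by lia.
    split; [apply Hnbhd; lra|]. apply Xp_2. pose proof (iterf_01 s x (proj1 Hx)). lra.
Qed.

End PiecewiseAffineMap.

Theorem proposition1 (lam mu : R) (f : R -> R) :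
  0 < lam < 1 -> 0 < mu < 1 -> lam + mu > 1 ->
  let c := (1 - mu) / lam in
  (forall x, 0 <= x <= 1 -> 0 <= f x <= 1) ->
  (forall x, 0 <= x < c -> f x = lam * x + mu) ->
  (forall x, c < x <= 1 -> f x = lam * x + mu - 1) ->
  (forall (k : nat) x, f 1 <= x <= f 0 -> iterf f k x <> c) ->
  P1 2 (pts2 c) f lam /\ P2 2 (pts2 c) f /\ P3 2 (pts2 c) f /\
  P4 2 (pts2 c) f /\ P5 2 (pts2 c) f /\ P6 2 (pts2 c) f.
Proof.
  intros Hlam Hmu Hsum c Hf01 Hf_left Hf_right Hgap. subst c.
  split; [eapply P1_holds; eassumption|].
  split; [eapply P2_holds; eassumption|].
  split; [eapply P3_holds; eassumption|].
  split; [eapply P4_holds; eassumption|].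
  split; [eapply P5_holds; eassumption|].
  eapply P6_holds; eassumption.
Qed.
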